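(* Let $X$ be a regular space. Then $X$ is set star compact if and only if $X$ is countably compact.
   Context: For a family $\mathcal U$ of subsets of $X$ and $A\subseteq X$, $st(A,\mathcal U)=\bigcup\{U\in\mathcal U: U\cap A\neq\emptyset\}$. A space $X$ is set star compact if for every nonempty $A\subseteq X$ and every family $\mathcal U$ of open subsets of $X$ with $\overline A\subseteq\bigcup\mathcal U$ there is a finite $\mathcal V\subseteq\mathcal U$ with $A\subseteq st(\bigcup\mathcal V,\mathcal U)$. No separation axioms are assumed beyond those stated. *)

From HB Require Import structures.
From mathcomp Require Import all_boot all_order.
From mathcomp Require Import all_classical all_reals all_analysis.
Set Implicit Arguments. Unset Strict Implicit. Unset Printing Implicit Defensive.
Local Open Scope classical_set_scope.

Definition star {T : Type} (A : set T) (U : set (set T)) : set T :=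
  \bigcup_(V in [set V | U V /\ V `&` A !=set0]) V.

Definition set_star_compact (T : topologicalType) : Prop :=
  forall (A : set T) (U : set (set T)),
    A !=set0 -> (forall V, U V -> open V) ->
    closure A `<=` \bigcup_(V in U) V ->
    exists W : set (set T),
      [/\ finite_set W, W `<=` U & A `<=` star (\bigcup_(V in W) V) U].

Definition countably_compact (T : topologicalType) : Prop :=
  forall U : set (set T),
    countable U -> (forall V, U V -> open V) ->
    [set: T] `<=` \bigcup_(V in U) V ->
    exists W : set (set T),
      [/\ finite_set W, W `<=` U & [set: T] `<=` \bigcup_(V in W) V].

From mathcomp Require Import all_boot all_order.
From mathcomp Require Import all_classical all_reals all_analysis.
Set Implicit Arguments.
Unset Strict Implicit.
Unset Printing Implicit Defensive.
Local Open Scope classical_set_scope.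

(* A space is countably compact iff every nondecreasing open cover (V n) has
   a member equal to the whole space.  If X is countably compact and A, U
   witness the failure of set star compactness, pick points x n of A, each
   outside the star of the finitely many members of U chosen before it, and
   then a member of U through x n; no member of U contains two terms of
   (x n), which is impossible near a cluster point of (x n) in closure A.
   Conversely, if (V n) is a nondecreasing open cover of a regular X with no
   V n equal to X, regularity yields points a k outside V k with pairwise
   disjoint open neighbourhoods G k whose union contains the closure of
   {a k}; since the star of a finite union of members of a disjoint family
   is that union, set star compactness fails for A = {a k}, U = {G k}. *)

Lemma star_bigcup_trivIset (T : Type) (U W : set (set T)) :
  trivIset U id -> W `<=` U -> star (\bigcup_(V in W) V) U = \bigcup_(V in W) V.
Proof.
move=> trivU WU; apply/seteqP.
split=> [y [V [UV [z [Vz [Z WZ Zz]]]]] Vy|y [Z WZ Zy]].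
  by exists V => //; rewrite (trivU V Z) //; [exact: WU | exists z].
by exists Z => //; split; [exact: WU | exists y; split => //; exists Z].
Qed.

Lemma finite_subset_range_ub (T : Type) (V : nat -> set T) (W : set (set T)) :
  {homo V : n m / (n <= m)%N >-> n `<=` m} -> finite_set W -> W `<=` range V ->
  exists N, forall A, W A -> A `<=` V N.
Proof.
move=> V_nd /finite_seqP[s ->]; elim: s => [|A s IHs] sV; first by exists 0%N.
have [N ubN] : exists N, forall B, [set` s] B -> B `<=` V N.
  by apply: IHs => B sB; apply: sV; rewrite /= inE sB orbT.
have [k _ Ak] := sV A (mem_head A s).
exists (maxn k N) => B /=; rewrite inE => /orP[/eqP-> | sB].
  by rewrite -Ak; apply/V_nd/leq_maxl.
by move=> y /(ubN B sB); apply/V_nd/leq_maxr.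
Qed.

Lemma countably_compactP (T : topologicalType) :
  countably_compact T <->
  forall V : nat -> set T, (forall n, open (V n)) ->
    {homo V : n m / (n <= m)%N >-> n `<=` m} -> [set: T] `<=` \bigcup_n V n ->
    exists n, [set: T] `<=` V n.
Proof.
split=> [ccT V oV V_nd Vcover | ndT U cU oU Ucover].
  have [|_ [k _ <-] //|p _|W [fW WV Wcover]] := ccT (range V).
  - exact: card_image_le.
  - by have [n _ Vnp] := Vcover p I; exists (V n) => //; exists n.
  have [N ubN] := finite_subset_range_ub V_nd fW WV.
  by exists N => p /Wcover[A WA Ap]; exact: ubN A WA p Ap.
have /countable_injP[f finj] := cU.
pose U_ n := [set A | U A /\ (f A <= n)%N].
have [||p _|n Ucover_n] := ndT (fun n => \bigcup_(A in U_ n) A).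
- by move=> n; apply: bigcup_open => A [UA _]; exact: oU.
- move=> n m nm p [A [UA fAn] Ap]; exists A => //; split => //.
  exact: leq_trans nm.
- by have [A UA Ap] := Ucover p I; exists (f A) => //; exists A.
exists (U_ n); split => //; last by move=> A [].
have finj_n : {in U_ n &, injective f}.
  by move=> A B /set_mem[UA _] /set_mem[UB _]; apply: finj; exact: mem_set.
rewrite -(eq_finite_set (inj_card_eq finj_n)).
by apply: sub_finite_set (finite_II n.+1) => _ [A [_ fAn] <-] /=; rewrite ltnS.
Qed.

Lemma countably_compact_cluster (T : topologicalType) (x : nat -> T) :
  countably_compact T ->
  exists p, forall n, closure (x @` [set m | (n <= m)%N]) p.
Proof.
move=> /countably_compactP ccT; apply: contrapT => noclust.
pose tail n := x @` [set m | (n <= m)%N].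
have [||p _|N VN] := ccT (fun n => ~` closure (tail n)).
- by move=> n; apply/closed_openC/closed_closure.
- move=> n m nm y nty; apply: contra_not nty; apply: closureS.
  by move=> _ [k mk <-]; exists k => //; exact: leq_trans mk.
- have /existsNP[n ntn] : ~ forall n, closure (tail n) p.
    by move=> clp; apply: noclust; exists p.
  by exists n.
by have /= := VN (x N) I; apply; apply: subset_closure; exists N => //=.
Qed.

Lemma not_star_covered_sequence (T : Type) (A : set T) (U : set (set T)) :
  A `<=` \bigcup_(V in U) V ->
  (forall W, finite_set W -> W `<=` U ->
    ~ A `<=` star (\bigcup_(V in W) V) U) ->
  exists2 x : nat -> T, (forall n, A (x n)) &
    forall V n m, U V -> (n < m)%N -> V (x n) -> ~ V (x m).
Proof.
move=> AU noW.
have [a0 Aa0] : A !=set0.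
  by apply/set0P/negP => /eqP A0; apply: (noW set0) => //; rewrite A0.
have [g gP] : {g : set (set T) -> T & forall W, finite_set W -> W `<=` U ->
    A (g W) /\ ~ star (\bigcup_(V in W) V) U (g W)}.
  apply: (@choice _ _ (fun W a => finite_set W -> W `<=` U ->
    A a /\ ~ star (\bigcup_(V in W) V) U a)) => W.
  have [[fW WU]|nW] := pselect (finite_set W /\ W `<=` U); last first.
    by exists a0 => fW WU; case: nW.
  have /existsNP[a /not_implyP[Aa nsta]] := noW W fW WU.
  by exists a.
have [h hP] : {h : T -> set T & forall a, A a -> U (h a) /\ h a a}.
  apply: (@choice _ _ (fun a V => A a -> U V /\ V a)) => a.
  have [Aa|nAa] := pselect (A a); last by exists set0.
  by have [V UV Va] := AU a Aa; exists V.
pose W k := iter k (fun W => W `|` [set h (g W)]) set0.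
have WP k : finite_set (W k) /\ W k `<=` U.
  elim: k => [|k [fWk WkU]] /=; first by split => //; exact: finite_set0.
  have [Ag _] := gP _ fWk WkU.
  rewrite finite_setU; split; first by split => //; exact: finite_set1.
  by move=> V [/WkU //|->]; exact: (hP _ Ag).1.
have W_nd n m : (n <= m)%N -> W n `<=` W m.
  by move=> /subnK <-; elim: (m - n)%N => [|k IHk] //= V /IHk; left.
exists (fun k => g (W k)) => [k|V n m UV nm Vxn Vxm].
  by have [fWk WkU] := WP k; exact: (gP _ fWk WkU).1.
have [fWn WnU] := WP n; have [fWm WmU] := WP m.
have [Axn _] := gP _ fWn WnU.
(* x n lies in h (x n), a member of W m, so V puts x m in the star of W m. *)
apply: (gP _ fWm WmU).2; exists V => //; split => //.
exists (g (W n)); split => //; exists (h (g (W n))); last exact: (hP _ Axn).2.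
by apply: (W_nd n.+1 m nm); right.
Qed.

Lemma countably_compact_set_star_compact (T : topologicalType) :
  countably_compact T -> set_star_compact T.
Proof.
move=> ccT A U _ oU clAU; apply: contrapT => noW.
have [x Ax xU] := not_star_covered_sequence
  (subset_trans (@subset_closure _ A) clAU)
  (fun W fW WU AW => noW (ex_intro _ W (And3 fW WU AW))).
have [p clp] := countably_compact_cluster x ccT.
have [V UV Vp] : (\bigcup_(V in U) V) p.
  by apply/clAU/(closureS _ (clp 0%N)) => _ [m _ <-]; exact: Ax.
have Vnbhs : nbhs p V by apply: open_nbhs_nbhs; split => //; exact: oU.
have [_ [[n _ <-] Vxn]] := clp 0%N V Vnbhs.
have [_ [[m nm <-] Vxm]] := clp n.+1 V Vnbhs.
exact: xU UV nm Vxn Vxm.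
Qed.

Lemma regular_closure_set1 (T : topologicalType) (a : T) (B : set T) :
  regular_space T -> nbhs a B -> closure [set a] `<=` B.
Proof.
move=> regT /regT[C Ca clCB]; apply: subset_trans clCB; apply: closureS.
by move=> _ ->; exact: nbhs_singleton.
Qed.

Lemma regular_open_shrink (T : topologicalType) (p : T) (S W : set T) :
  regular_space T -> open W -> W p -> ~ closure S p ->
  exists O, [/\ open O, O p, O `&` S = set0 & closure O `<=` W].
Proof.
move=> regT oW Wp nSp.
have /regT[C Cp clC] : nbhs p (W `&` ~` closure S).
  apply: open_nbhs_nbhs; split => //.
  by apply: openI => //; exact/closed_openC/closed_closure.
have clCi : closure C° `<=` W `&` ~` closure S.
  exact: subset_trans (closureS (@interior_subset _ C)) clC.
exists C°; split.
- exact: open_interior.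
- exact: nbhs_singleton (nbhs_interior Cp).
- apply/disjoints_subset => y /subset_closure /clCi [_ nSy] Sy.
  exact/nSy/subset_closure.
- by move=> y /clCi[].
Qed.

Lemma regular_closure_range_escaping (T : topologicalType) (V : nat -> set T)
    (a : nat -> T) (G : nat -> set T) :
  regular_space T -> (forall n, open (V n)) ->
  {homo V : n m / (n <= m)%N >-> n `<=` m} -> [set: T] `<=` \bigcup_n V n ->
  (forall k, ~ V k (a k)) -> (forall k, nbhs (a k) (G k)) ->
  closure (range a) `<=` \bigcup_k G k.
Proof.
move=> regT oV V_nd Vcover aV Ga p clp; apply: contrapT => pG.
have [n _ Vnp] := Vcover p I.
have off k : \forall y \near p, y <> a k.
  have : ~ closure [set a k] p.
    by move=> /(regular_closure_set1 regT (Ga k)) Gkp; apply: pG; exists k.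
  move=> /existsNP[B /not_implyP[pB nB]]; apply: filterS pB => y By yak.
  by apply: nB; exists (a k); split => //; rewrite -yak.
have offn : \forall y \near p, forall i : 'I_n, y <> a i.
  by apply: filter_forall => i; exact: off.
have Vn_p : nbhs p (V n) by exact: open_nbhs_nbhs (conj (oV n) Vnp).
have [_ [[k _ <-] [Vnak /= offak]]] := clp _ (filterI Vn_p offn).
have [kn|nk] := ltnP k n; first exact: (offak (Ordinal kn)).
exact/(aV k)/(V_nd _ _ nk).
Qed.

Section disjoint_open_sequence.
Variables (T : topologicalType) (V : nat -> set T) (x : nat -> T).
Hypotheses (regT : regular_space T) (oV : forall n, open (V n))
  (V_nd : {homo V : n m / (n <= m)%N >-> n `<=` m})
  (Vcover : [set: T] `<=` \bigcup_n V n) (xV : forall n, ~ V n (x n)).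

Definition separating_successor (s t : nat * set T) :=
  [/\ open t.2, t.2 (x s.1), t.2 `&` s.2 = set0, closure t.2 `<=` V t.1
    & (s.1 < t.1)%N].

Lemma separating_successor_exists (s : nat * set T) :
  open s.2 -> closure s.2 `<=` V s.1 -> exists t, separating_successor s t.
Proof.
case: s => m S /= oS clS; have [n _ Vnx] := @Vcover (x m) I.
have [B [oB Bx BS clB]] :=
  regular_open_shrink regT (oV n) Vnx (fun clSx => @xV m (clS _ clSx)).
exists (n, B); split => //=; rewrite ltnNge; apply/negP => nm.
exact/(@xV m)/(V_nd nm)/clB/subset_closure.
Qed.

Lemma disjoint_open_sequence : exists (a : nat -> T) (G : nat -> set T),
  [/\ trivIset setT G, forall k, open (G k), forall k, G k (a k)
    & forall k, ~ V k (a k)].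
Proof.
have [nxt nxtP] : {nxt : nat * set T -> nat * set T & forall s,
    open s.2 -> closure s.2 `<=` V s.1 -> separating_successor s (nxt s)}.
  apply: (@choice _ _ (fun s t => open s.2 -> closure s.2 `<=` V s.1 ->
    separating_successor s t)) => s.
  have [[os cls]|ns] := pselect (open s.2 /\ closure s.2 `<=` V s.1).
    by have [t] := separating_successor_exists os cls; exists t.
  by exists s => os cls; case: ns.
(* s k = (m k, G 0 `|` ... `|` G k.-1) *)
pose s k := iter k (fun s => ((nxt s).1, s.2 `|` (nxt s).2)) (0%N, set0).
pose m k := (s k).1; pose G k := (nxt (s k)).2.
have s_inv k : open (s k).2 /\ closure (s k).2 `<=` V (m k).
  elim: k => [|k [osk clsk]] /=.
    by split; [exact: open0 | rewrite closure0].
  have [oG _ _ clG mk] := nxtP _ osk clsk.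
  split; first exact: openU.
  by rewrite closureU => y [/clsk/(V_nd (ltnW mk))|/clG].
have {}nxtP k : separating_successor (s k) (nxt (s k)).
  by have [] := s_inv k; exact: nxtP.
have s_nd k l : (k <= l)%N -> (s k).2 `<=` (s l).2.
  by move=> /subnK <-; elim: (l - k)%N => [|j IHj] //= y /IHj; left.
have k_le_m k : (k <= m k)%N.
  by elim: k => [|k IHk] //; have [_ _ _ _ /(leq_ltn_trans IHk)] := nxtP k.
exists (fun k => x (m k)), G; split => [i j _ _ [y [Giy Gjy]]||k|k].
- wlog ij : i j Giy Gjy / (i < j)%N.
    move=> wlog_ij; case: (ltngtP i j) => [||//]; first exact: wlog_ij.
    by symmetry; exact: wlog_ij.
  have [_ _ /disjoints_subset Gjs _ _] := nxtP j.
  by case: (Gjs y Gjy); apply: (s_nd i.+1 j ij); right.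
- by move=> k; have [] := nxtP k.
- by have [] := nxtP k.
- by move/(V_nd (k_le_m k)); exact: xV.
Qed.
End disjoint_open_sequence.

Lemma set_star_compact_disjoint_open_sequence (T : topologicalType)
    (a : nat -> T) (G : nat -> set T) :
  set_star_compact T -> trivIset setT G -> (forall k, open (G k)) ->
  (forall k, G k (a k)) -> ~ closure (range a) `<=` \bigcup_k G k.
Proof.
move=> sscT trivG oG Ga clG.
have [||p /clG[k _ Gkp]|W [fW WO aW]] := sscT (range a) (range G).
- by exists (a 0%N), 0%N.
- by move=> _ [k _ <-]; exact: oG.
- by exists (G k) => //; exists k.
rewrite star_bigcup_trivIset // in aW; last exact: trivIset_sets.
have GW : range G `<=` W.
  move=> _ [j _ <-]; have [Z WZ Zaj] := aW (a j) (ex_intro2 _ _ j I erefl).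
  have [l _ lZ] := WO Z WZ; rewrite -lZ in WZ Zaj.
  by rewrite -(trivG l j) //; exists (a j).
have Ginj : set_inj setT G by apply: trivIset_inj trivG => k _; exists (a k).
apply: infinite_nat; rewrite -(eq_finite_set (inj_card_eq Ginj)).
exact: sub_finite_set GW fW.
Qed.

Lemma regular_set_star_compact_countably_compact (T : topologicalType) :
  regular_space T -> set_star_compact T -> countably_compact T.
Proof.
move=> regT sscT; apply/countably_compactP => V oV V_nd Vcover.
apply: contrapT => /forallNP noV.
have [x xV] : {x : nat -> T & forall n, ~ V n (x n)}.
  apply: (@choice _ _ (fun n y => ~ V n y)) => n.
  by have /existsNP[y /not_implyP[_ nVy]] := noV n; exists y.
have [a [G [trivG oG Ga aV]]] := disjoint_open_sequence regT oV V_nd Vcover xV.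
apply: (set_star_compact_disjoint_open_sequence sscT trivG oG Ga).
apply: (regular_closure_range_escaping regT oV V_nd Vcover aV) => k.
exact: open_nbhs_nbhs (conj (oG k) (Ga k)).
Qed.

Theorem proposition1p2 (T : topologicalType) :
  @regular_space T -> (set_star_compact T <-> countably_compact T).
Proof.
move=> regT; split; first exact: regular_set_star_compact_countably_compact.
exact: countably_compact_set_star_compact.
Qed.
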